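(* Let $S$ be a set of $n$ points in $\mathbb{R}^k$ under an $L_p$ metric $d$ ($1\le p<\infty$). Consider the following level-by-level construction: set $S_1=S$; given a nonempty $S_i$, choose a pivot $p_i$ uniformly at random from $S_i$ (independently of previous levels), let $d_i=d(p_i,S_i)$, form the axis-aligned grid $G_i$ with boxes of side length $d_i/(6k)$, let $S_i'$ be the set of points $x\in S_i$ such that no other point of $S_i$ lies in the $3^k$ boxes of $G_i$ consisting of the box containing $x$ and its bordering boxes, set $S_{i+1}=S_i\setminus S_i'$, and recurse on $S_{i+1}$ if it is nonempty. Then with high probability the construction makes $O(\log n)$ recursive calls, i.e., the resulting sparse partition has $O(\log n)$ levels.
   Context: $d(x,T)=\min\{d(x,y):y\in T\setminus\{x\}\}$. A bound holds with high probability on input size $n$ if it holds with probability at least $1-1/n^c$ for some constant $c>0$. *)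

From HB Require Import structures.
From mathcomp Require Import all_boot all_order all_algebra.
From mathcomp Require Import all_classical all_reals all_analysis.
Set Implicit Arguments. Unset Strict Implicit. Unset Printing Implicit Defensive.
Import Order.TTheory GRing.Theory Num.Theory.
Local Open Scope ring_scope.

(* Points of R^k are row vectors 'rV[R]_k; a finite point set is a
   duplicate-free sequence of points. *)

Section SparsePartition.
Variables (R : realType) (k : nat) (p : R).

Definition Lp_dist (x y : 'rV[R]_k) : R :=
  (\sum_(j < k) `|x ord0 j - y ord0 j| `^ p) `^ (p^-1).

(* d(x,T) = min { d(x,y) : y in T \ {x} }  (value 0 if T \ {x} is empty;
   this case only occurs when |T| = 1 and is irrelevant to the process). *)
Definition nn_dist (x : 'rV[R]_k) (T : seq 'rV[R]_k) : R :=
  let ds := [seq Lp_dist x y | y <- T & y != x] in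
  foldr Num.min (head 0 ds) ds.

Definition cell (s t : R) : int := Num.floor (t / s).

Definition near_box (s : R) (x y : 'rV[R]_k) : bool :=
  [forall j : 'I_k, `|cell s (y ord0 j) - cell s (x ord0 j)| <= 1].

Definition isolated (s : R) (T : seq 'rV[R]_k) (x : 'rV[R]_k) : bool :=
  ~~ has (fun y => (y != x) && near_box s x y) T.

Definition next_level (T : seq 'rV[R]_k) (q : 'rV[R]_k) : seq 'rV[R]_k :=
  let s := nn_dist q T / (6 * k%:R) in
  [seq x <- T | ~~ isolated s T x].

(* prob_within T m = probability that the construction started at S_1 = T,
   with pivots chosen independently and uniformly at each level, terminates
   after at most m levels (i.e. S_{m+1} is empty). *)
Fixpoint prob_within (T : seq 'rV[R]_k) (m : nat) : R :=
  match m with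
  | 0 => if T is [::] then 1 else 0
  | m'.+1 =>
      if T is [::] then 1
      else (size T)%:R^-1 * \sum_(q <- T) prob_within (next_level T q) m'
  end.

End SparsePartition.

From Pilot Require Import Defs.
From mathcomp Require Import all_boot all_order all_algebra.
From mathcomp Require Import all_classical all_reals all_analysis.
From mathcomp Require Import ring lra.
Set Implicit Arguments. Unset Strict Implicit. Unset Printing Implicit Defensive.
Import Order.TTheory GRing.Theory Num.Theory.
Local Open Scope ring_scope.

(* Write d(x) for the nearest-neighbour distance d(x, S_i).  If the pivot q
   satisfies d(q) <= d(x), then x lands in S_i': a point in one of the 3^k
   boxes around x is within L_p distance k * 2 d(q) / (6k) < d(x) of x.  So
   |S_{i+1}| is at most the number of points x with d(x) < d(q), and summing
   over the uniformly chosen pivot q counts every pair at most once, whence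
   E |S_{i+1}| <= |S_i| / 2.  The probability that S_{m+1} is nonempty is thus
   at most n / 2^m, which is at most 1/n as soon as m >= 2 log_2 n. *)

Lemma sub_in_count (T : eqType) (a1 a2 : pred T) (s : seq T) :
  {in s, forall x, a1 x -> a2 x} -> (count a1 s <= count a2 s)%N.
Proof.
elim: s => //= z s IH a12.
apply: leq_add; last by apply: IH => x xs; apply: a12; rewrite inE xs orbT.
by case: (a1 z) (a12 z (mem_head _ _)) => //= ->.
Qed.

Lemma sum_count_lt_le (T : Type) (d : Order.disp_t) (O : orderType d)
    (f : T -> O) (s : seq T) :
  (2 * \sum_(q <- s) count (fun x => (f x < f q)%O) s <= size s ^ 2)%N.
Proof.
have count_sum q :
    count (fun x => (f x < f q)%O) s = (\sum_(x <- s) (f x < f q)%O)%N.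
  by rewrite -sum1_count big_mkcond.
rewrite (eq_bigr _ (fun q _ => count_sum q)) mul2n -addnn.
rewrite {2}exchange_big -big_split /=.
apply: (@leq_trans (\sum_(q <- s) \sum_(x <- s) 1)%N).
  apply: leq_sum => q _; rewrite -big_split; apply: leq_sum => x _ /=.
  by case: (ltgtP (f x) (f q)).
rewrite (eq_bigr (fun _ => size s)) => [|q _]; last by rewrite sum1_size.
by rewrite big_const_seq count_predT iter_addn_0.
Qed.

Lemma foldr_min_le (R : realDomainType) (a : R) ds z :
  z \in ds -> foldr Num.min a ds <= z.
Proof.
elim: ds => //= d ds IH; rewrite inE => /orP [/eqP -> | /IH le_z].
  by rewrite ge_min lexx.
by rewrite ge_min le_z orbT.
Qed.

Lemma foldr_min_gt0 (R : realDomainType) (a : R) ds :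
  0 < a -> all (fun z => 0 < z) ds -> 0 < foldr Num.min a ds.
Proof.
move=> a_gt0; elim: ds => //= d ds IH /andP [d_gt0 /IH min_gt0].
by rewrite lt_min d_gt0 min_gt0.
Qed.

Lemma cell_dist_lt (R : realType) (s a b : R) :
  0 < s -> `|cell s a - cell s b| <= 1 -> `|a - b| < 2 * s.
Proof.
move=> s_gt0; rewrite /cell ler_norml => /andP [lo hi].
move: (floor_itv (a / s)) (floor_itv (b / s)) => /andP [a1 a2] /andP [b1 b2].
have {lo}lo : (-1 : R) <= (Num.floor (a / s))%:~R - (Num.floor (b / s))%:~R.
  by rewrite -intrB -[X in X <= _]/(((-1)%:~R : R)) ler_int.
have {hi}hi : (Num.floor (a / s))%:~R - (Num.floor (b / s))%:~R <= 1 :> R.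
  by rewrite -intrB -[X in _ <= X]/((1%:~R : R)) ler_int.
rewrite intrD in a2; rewrite intrD in b2.
have : `|a / s - b / s| < 2 by rewrite ltr_norml; apply/andP; split; lra.
by rewrite -mulrBl normrM [`|s^-1|]gtr0_norm ?invr_gt0 // ltr_pdivrMr.
Qed.

Section NearestNeighbour.
Variables (R : realType) (k : nat) (p : R).
Implicit Types (x y : 'rV[R]_k) (T : seq 'rV[R]_k).

Lemma Lp_dist_gt0 x y : 0 < p -> x != y -> 0 < Lp_dist p x y.
Proof.
move=> p_gt0 xy; apply: powR_gt0.
have [j xyj | eq_xy] := pickP (fun j => x ord0 j != y ord0 j); last first.
  by case/eqP: xy; apply/rowP => j; apply/eqP/negbFE/eq_xy.
rewrite (bigD1 j) //=; apply: ltr_pwDl.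
  by apply: powR_gt0; rewrite normr_gt0 subr_eq0.
by apply: sumr_ge0 => i _; apply: powR_ge0.
Qed.

Lemma Lp_dist_le x y (t : R) : 1 <= p -> 0 <= t ->
  (forall j, `|x ord0 j - y ord0 j| <= t) -> Lp_dist p x y <= k%:R * t.
Proof.
move=> p_ge1 t_ge0 le_t; have p_gt0 : 0 < p by apply: lt_le_trans p_ge1.
have kt_ge0 : 0 <= k%:R * t by rewrite mulr_ge0.
have sum_le : \sum_(j < k) `|x ord0 j - y ord0 j| `^ p <= (k%:R * t) `^ p.
  apply: (@le_trans _ _ (\sum_(j < k) t `^ p)).
    apply: ler_sum => j _.
    by apply: (ge0_ler_powR (ltW p_gt0)); rewrite ?nnegrE.
  rewrite sumr_const card_ord powRM // -[t `^ p *+ k]mulr_natl.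
  apply: ler_wpM2r; first exact: powR_ge0.
  case: k => [|n]; first by rewrite powR0 ?gt_eqF.
  by rewrite -{1}(powRr1 (ler0n _ n.+1)) ler_powR ?ler1n.
apply: (@le_trans _ _ (((k%:R * t) `^ p) `^ p^-1)).
  apply: ge0_ler_powR; rewrite ?nnegrE ?invr_ge0 ?(ltW p_gt0) ?powR_ge0 //.
  by apply: sumr_ge0 => j _; apply: powR_ge0.
by rewrite -powRrM mulfV ?gt_eqF // powRr1.
Qed.

Lemma nn_dist_le x y T : y \in T -> y != x -> nn_dist p x T <= Lp_dist p x y.
Proof. by move=> yT yx; apply/foldr_min_le/map_f; rewrite mem_filter yx. Qed.

Lemma nn_dist_gt0 x y T : 0 < p -> y \in T -> y != x -> 0 < nn_dist p x T.
Proof.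
move=> p_gt0 yT yx; rewrite /nn_dist /=.
set ds := [seq _ | _ <- _].
have ds_gt0 : all (fun z => 0 < z) ds.
  apply/allP => z /mapP [w]; rewrite mem_filter => /andP [wx _] ->.
  by apply: Lp_dist_gt0; rewrite // eq_sym.
have : ds != [::].
  rewrite -size_eq0 size_map size_filter -lt0n -has_count.
  by apply/hasP; exists y.
case: ds ds_gt0 => // d ds' /= /andP [d_gt0 ds'_gt0] _.
by rewrite lt_min d_gt0 foldr_min_gt0.
Qed.

End NearestNeighbour.

Section Levels.
Variables (R : realType) (k : nat) (p : R).
Hypothesis p_ge1 : 1 <= p.
Implicit Types (x y q : 'rV[R]_k) (T : seq 'rV[R]_k).

Lemma near_box_Lp_dist_le (s : R) x y :
  0 < s -> near_box s x y -> Lp_dist p x y <= k%:R * (2 * s).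
Proof.
move=> s_gt0 /forallP near_xy.
apply: Lp_dist_le p_ge1 _ _; first by rewrite mulr_ge0 ?ltW.
by move=> j; rewrite distrC ltW // cell_dist_lt.
Qed.

Lemma isolated_of_nn_dist_le T q x : q \in T -> x \in T ->
  nn_dist p q T <= nn_dist p x T ->
  Defs.isolated (nn_dist p q T / (6 * k%:R)) T x.
Proof.
move=> qT xT le_qx; apply/hasPn => y yT; apply/negP => /andP [yx near_xy].
have p_gt0 : 0 < p by apply: lt_le_trans p_ge1.
have k_gt0 : (0 < k)%N.
  case: k x y yx {xT yT near_xy le_qx qT} => // x y.
  by case/eqP; apply/rowP => [[]].
have d_gt0 : 0 < nn_dist p q T.
  have [<- | xq] := eqVneq x q; first exact: nn_dist_gt0 p_gt0 yT yx.
  exact: nn_dist_gt0 p_gt0 xT xq.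
set d := nn_dist p q T in le_qx d_gt0 near_xy *.
have s_gt0 : 0 < d / (6 * k%:R) by rewrite divr_gt0 ?mulr_gt0 ?ltr0n.
have := near_box_Lp_dist_le s_gt0 near_xy; have := nn_dist_le p yT yx.
have -> : k%:R * (2 * (d / (6 * k%:R))) = d / 3.
  by field; rewrite pnatr_eq0 -lt0n.
lra.
Qed.

Lemma size_next_level_le T q : q \in T ->
  (size (next_level p T q)
     <= count (fun x => (nn_dist p x T < nn_dist p q T)%R) T)%N.
Proof.
move=> qT; rewrite size_filter; apply: sub_in_count => x xT.
by apply: contraR; rewrite -leNgt; apply: isolated_of_nn_dist_le.
Qed.

Lemma sum_size_next_level_le T :
  (2 * \sum_(q <- T) size (next_level p T q) <= size T ^ 2)%N.
Proof.
apply: leq_trans (sum_count_lt_le (fun x => nn_dist p x T) T).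
rewrite leq_mul2l big_seq [X in (_ <= X)%N]big_seq.
by apply/orP; right; apply: leq_sum => q; apply: size_next_level_le.
Qed.

Lemma prob_within_fail_le T m :
  1 - prob_within p T m <= (size T)%:R / 2 ^+ m.
Proof.
elim: m T => [|m IH] [|a T'] //=; rewrite ?subrr ?mul0r //.
  by rewrite expr0 divr1 subr0 ler1n.
set T := a :: T'; set n := (size T)%:R; set e := (2 : R) ^+ m.
have n_gt0 : 0 < n by rewrite ltr0n.
have e_gt0 : 0 < e by rewrite exprn_gt0.
pose B : R := (\sum_(q <- T) size (next_level p T q))%N%:R.
have fail_avg : 1 - n^-1 * \sum_(q <- T) prob_within p (next_level p T q) m =
    n^-1 * \sum_(q <- T) (1 - prob_within p (next_level p T q) m).
  have sum1 : \sum_(q <- T) (1 : R) = n by rewrite /n -sum1_size natr_sum.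
  by rewrite sumrB sum1 mulrBr mulVf ?gt_eqF.
have fail_sum : \sum_(q <- T) (1 - prob_within p (next_level p T q) m) <= B / e.
  by rewrite /B natr_sum mulr_suml; apply: ler_sum => q _; apply: IH.
have twice_B : 2 * B <= n ^+ 2.
  by rewrite /B /n -natrX -natrM ler_nat sum_size_next_level_le.
rewrite fail_avg exprS -/e.
apply: (@le_trans _ _ (n^-1 * (B / e))).
  by rewrite ler_wpM2l // invr_ge0 ltW.
have -> : n / (2 * e) = n^-1 * (n ^+ 2 / 2 / e).
  by field; rewrite !gt_eqF.
by rewrite ler_pM2l ?invr_gt0 // ler_pM2r ?invr_gt0 //; lra.
Qed.

End Levels.

Lemma sqr_le_exp2n (R : realType) (x : R) m :
  0 < x -> 2 / ln 2 * ln x <= m%:R -> x ^+ 2 <= 2 ^+ m.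
Proof.
move=> x_gt0 le_m; have ln2_gt0 : 0 < ln (2 : R) by rewrite ln_gt0 ?ltr1n.
rewrite -ler_ln ?posrE ?exprn_gt0 // !lnXn //.
rewrite -[_ *+ 2]mulr_natr -[_ *+ m]mulr_natr.
have -> : ln x * 2%:R = 2 / ln 2 * ln x * ln 2 by field; rewrite gt_eqF.
by rewrite [ln 2 * _]mulrC ler_pM2r.
Qed.

Theorem lemma4p1 (R : realType) (k : nat) (p : R) :
  1 <= p ->
  exists (C c : R), 0 < C /\ 0 < c /\
    forall (S : seq 'rV[R]_k), uniq S -> (2 <= size S)%N ->
    forall m : nat, C * ln (size S)%:R <= m%:R ->
      1 - ((size S)%:R `^ c)^-1 <= prob_within p S m.
Proof.
move=> p_ge1; have ln2_gt0 : 0 < ln (2 : R) by rewrite ln_gt0 ?ltr1n.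
exists (2 / ln 2), 1; split; first by rewrite divr_gt0.
split=> // S _ S_ge2 m le_m.
set n := (size S)%:R in le_m *.
have n_gt0 : 0 < n by rewrite ltr0n (leq_trans _ S_ge2).
have fail_le : 1 - prob_within p S m <= n / 2 ^+ m.
  exact: prob_within_fail_le.
have : n / 2 ^+ m <= n^-1.
  have -> : n^-1 = n / n ^+ 2 by field; rewrite gt_eqF.
  by rewrite ler_pM2l // lef_pV2 ?posrE ?exprn_gt0 // sqr_le_exp2n.
rewrite powRr1 ?(ltW n_gt0); lra.
Qed.
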